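(* Let $M\in\mathbb{R}_+^{p\times q}$ be a nonnegative matrix. Then $M$ is a slack matrix of a polyhedral cone if and only if $$\{x^TM : x\in\mathbb{R}_+^p\}=\{x^TM : x\in\mathbb{R}^p\}\cap\mathbb{R}_+^q,$$ i.e., the cone spanned by the rows of $M$ coincides with the set of nonnegative vectors in the row span of $M$.
   Context: $\mathbb{R}_+$ denotes the nonnegative reals. A matrix $S\in\mathbb{R}^{p\times q}$ is a slack matrix of a polyhedral cone $K\subseteq\mathbb{R}^n$ if there are matrices $A\in\mathbb{R}^{p\times n}$ and $B\in\mathbb{R}^{n\times q}$ with $K=\{x\in\mathbb{R}^n: x^TB\ge 0\}=\{y^TA: y\in\mathbb{R}_+^p\}$ (the columns of $B$ give an $\mathcal{H}$-representation and the rows of $A$ a $\mathcal{V}$-representation of $K$) and $S=AB$. A matrix is a slack matrix of a polyhedral cone if it is a slack matrix of some polyhedral cone $K$ (in some $\mathbb{R}^n$). *)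

From mathcomp Require Import all_boot all_order all_algebra.
From mathcomp Require Import reals.
Set Implicit Arguments. Unset Strict Implicit. Unset Printing Implicit Defensive.
Import Order.TTheory GRing.Theory Num.Theory.
Local Open Scope ring_scope.

Definition nonneg_mx (R : realType) (m n : nat) (M : 'M[R]_(m, n)) : Prop :=
  forall i j, 0 <= M i j.

(* S is a slack matrix of a polyhedral cone K in R^n: there are A (p x n),
   B (n x q) with K = {x : x^T B >= 0} = {y^T A : y >= 0} and S = A B.
   Row vectors 'rV_n represent x^T. *)
Definition is_slack_matrix_of_cone (R : realType) (p q : nat)
    (S : 'M[R]_(p, q)) : Prop :=
  exists (n : nat) (A : 'M[R]_(p, n)) (B : 'M[R]_(n, q)),
    (forall x : 'rV[R]_n,
        nonneg_mx (x *m B) <-> exists y : 'rV[R]_p, nonneg_mx y /\ x = y *m A)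
    /\ S = A *m B.

From mathcomp Require Import all_boot all_order all_algebra.
From mathcomp Require Import reals.
Import Order.TTheory GRing.Theory Num.Theory.
Local Open Scope ring_scope.

(* If S = A B with K = {x : x B >= 0} = cone(rows of A), then x A B >= 0 says
   exactly that x A lies in K, i.e. is a nonnegative combination of the rows
   of A; this gives the cone condition on S.  Conversely, take for B a row
   basis of M and for A the coordinates of the rows of M in that basis: as B
   is row free, x B ranges injectively over the row space of M, so the cone
   condition on M is precisely the required equality of the H- and
   V-descriptions. *)

Section RowCone.

Variables (R : realType) (p q : nat).

Definition row_cone_eq (M : 'M[R]_(p, q)) : Prop :=
  forall v : 'rV[R]_q,
    (exists x : 'rV[R]_p, nonneg_mx x /\ v = x *m M) <->
    ((exists x : 'rV[R]_p, v = x *m M) /\ nonneg_mx v).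

Lemma slack_row_cone_eq (n : nat) (A : 'M[R]_(p, n)) (B : 'M[R]_(n, q)) :
  (forall x : 'rV[R]_n,
     nonneg_mx (x *m B) <-> exists y : 'rV[R]_p, nonneg_mx y /\ x = y *m A) ->
  row_cone_eq (A *m B).
Proof.
move=> coneK v; split.
- move=> [x [x_ge0 ->]]; split; first by exists x.
  by rewrite mulmxA; apply/coneK; exists x.
- move=> [[x ->]]; rewrite mulmxA => /coneK [y [y_ge0 ->]].
  by exists y; rewrite mulmxA.
Qed.

Lemma row_cone_eq_slack (M : 'M[R]_(p, q)) :
  row_cone_eq M -> is_slack_matrix_of_cone M.
Proof.
move=> coneM; have M_sub : (M <= row_base M)%MS by rewrite eq_row_base.
exists (\rank M), (M *m pinvmx (row_base M)), (row_base M).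
split; last by rewrite mulmxKpV.
move=> x; split.
- move=> xB_ge0.
  have /submxP [z xB_row] : (x *m row_base M <= M)%MS.
    by rewrite (submx_trans (submxMl _ _)) ?eq_row_base.
  have [y [y_ge0 xB_cone]] := (coneM (x *m row_base M)).2
    (conj (ex_intro _ z xB_row) xB_ge0).
  exists y; split => //; apply: (row_free_inj (row_base_free M)).
  by rewrite /= xB_cone -mulmxA mulmxKpV.
- move=> [y [y_ge0 ->]]; rewrite -mulmxA mulmxKpV //.
  by apply: ((coneM (y *m M)).1 _).2; exists y.
Qed.

End RowCone.

Theorem theorem2p1 (R : realType) (p q : nat) (M : 'M[R]_(p, q)) :
  nonneg_mx M ->
  (is_slack_matrix_of_cone M <->
   (forall v : 'rV[R]_q,
      (exists x : 'rV[R]_p, nonneg_mx x /\ v = x *m M) <->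
      ((exists x : 'rV[R]_p, v = x *m M) /\ nonneg_mx v))).
Proof.
move=> _; split; last exact: row_cone_eq_slack.
by move=> [n [A [B [coneK ->]]]]; apply: slack_row_cone_eq.
Qed.
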